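(* Under the hypotheses and notation of the tortuosity integral representation (let $\Theta_1,G,F,\eta,\rho_f,\phi,\nu,K,K_0,\alpha_\infty,T,a,\sigma$ be as there), let $d\lambda(\Theta):=\Theta\,dG(\Theta)$ on $[0,\Theta_1]$ and define the moments $\mu_k(d\lambda):=\int_0^{\Theta_1}\Theta^k\,d\lambda(\Theta)$, $\mu_k(d\sigma):=\int_0^{\Theta_1}t^k\,d\sigma(t)$ for $k\ge0$. Then (i) $\mu_0(d\lambda)=\frac{FK_0}{\nu}=\frac{\alpha_\infty K_0}{\phi\nu}$; (ii) for every $p\ge1$, $\mu_p(d\lambda)=\frac{\mu_0(d\lambda)}{\alpha_\infty}\sum_{k+j=p-1}\mu_k(d\sigma)\,\mu_j(d\lambda)$ (sum over $k,j\ge0$); (iii) in particular $\mu_0(d\sigma)=\frac{\alpha_\infty\,\mu_1(d\lambda)}{\mu_0(d\lambda)^2}=\frac{\nu^2\phi}{K_0^2F}\mu_1(d\lambda)$, equivalently $\alpha_\infty=\frac{\mu_0(d\sigma)\,\mu_0(d\lambda)^2}{\mu_1(d\lambda)}$.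
   Context: Standing hypotheses: $\Theta_1>0$; $G$ nondecreasing, right-continuous, $G=0$ on $(-\infty,0]$, $G=1$ on $[\Theta_1,\infty)$; $(F/\nu)K(\omega)=\int_0^{\Theta_1}\Theta\,dG(\Theta)/(1-i\omega\Theta)$; $K_0=K(0)$; $\alpha_\infty=\phi F$; $T(\omega)=\frac{i\eta\phi}{\omega\rho_f}K(\omega)^{-1}$; $a\ge0$ and the positive measure $\sigma$ on $[0,\Theta_1]$ are those for which $T(\omega)=a\,i/\omega+\int_0^{\Theta_1}d\sigma(t)/(1-i\omega t)$. *)

From Stdlib Require Import Reals Lra List ClassicalEpsilon.
Open Scope R_scope.

Record C := mkC { Re : R ; Im : R }.
Definition RtoC (x : R) : C := mkC x 0.
Definition Ci : C := mkC 0 1.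
Definition Cadd (z w : C) : C := mkC (Re z + Re w) (Im z + Im w).
Definition Cmul (z w : C) : C :=
  mkC (Re z * Re w - Im z * Im w) (Re z * Im w + Im z * Re w).
Definition Cinv (z : C) : C :=
  mkC (Re z / (Re z ^ 2 + Im z ^ 2)) (- Im z / (Re z ^ 2 + Im z ^ 2)).
Definition Cdiv (z w : C) : C := Cmul z (Cinv w).

(* A tagged partition of [x0,b] is a list of (tag, next point). *)
Fixpoint rs_sum (f g : R -> R) (x0 : R) (l : list (R * R)) : R :=
  match l with
  | nil => 0
  | (t, x1) :: l' => f t * (g x1 - g x0) + rs_sum f g x1 l'
  end.

Fixpoint tagged_part (x0 : R) (l : list (R * R)) (b d : R) : Prop :=
  match l with
  | nil => x0 = b
  | (t, x1) :: l' => x0 < x1 /\ x0 <= t <= x1 /\ x1 - x0 < d /\ tagged_part x1 l' b d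
  end.

Definition is_RS (f g : R -> R) (a b I : R) : Prop :=
  forall eps, 0 < eps -> exists d, 0 < d /\
    forall l, tagged_part a l b d -> Rabs (rs_sum f g a l - I) < eps.

(* the value of the integral (classical choice; 0 if it does not exist) *)
Definition RSint (f g : R -> R) (a b : R) : R :=
  epsilon (inhabits 0) (fun I => is_RS f g a b I).

(* Integral over [0,b] w.r.t. the positive measure whose distribution
   function D vanishes on (-oo,0) (so atoms at 0 are counted):
   realized as the RS integral over [-1,b]. *)
Definition mint (f D : R -> R) (b : R) : R := RSint f D (-1) b.

Definition Cmint (f : R -> C) (D : R -> R) (b : R) : C :=
  mkC (mint (fun t => Re (f t)) D b) (mint (fun t => Im (f t)) D b).

Definition nondecreasing (g : R -> R) : Prop := forall x y, x <= y -> g x <= g y.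
Definition right_continuous (g : R -> R) : Prop :=
  forall x eps, 0 < eps -> exists d, 0 < d /\ forall y, x <= y < x + d -> Rabs (g y - g x) < eps.

Definition one_m_iwt (w t : R) : C := mkC 1 (- (w * t)).

Definition Kfun (nu F Th1 : R) (G : R -> R) (w : R) : C :=
  Cmul (RtoC (nu / F)) (Cmint (fun th => Cdiv (RtoC th) (one_m_iwt w th)) G Th1).

Definition Tfun (eta phi rhof nu F Th1 : R) (G : R -> R) (w : R) : C :=
  Cmul (Cmul Ci (RtoC (eta * phi / (w * rhof)))) (Cinv (Kfun nu F Th1 G w)).

(* moments: dlambda = Th dG, so mu_k(dlambda) = int Th^(k+1) dG *)
Definition mu_lambda (Th1 : R) (G : R -> R) (k : nat) : R :=
  mint (fun th => th ^ k * th) G Th1.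
Definition mu_sigma (Th1 : R) (S : R -> R) (k : nat) : R :=
  mint (fun t => t ^ k) S Th1.

(* Write L_j(w) = int_0^Th1 th^j dlambda(th) / (1 - i w th) with dlambda = th dG,
   and S_k(w) = int_0^Th1 t^k dsigma(t) / (1 - i w t).  Multiplying the
   hypothesis T(w) = a i/w + S_0(w) by K(w) = (nu/F) L_0(w) gives, for w > 0,
        (i a + w S_0(w)) L_0(w) = i phi F.
   Since 1/(1 - iwt) = 1 + iwt/(1 - iwt), every transform satisfies
   L_j = mu_j(dlambda) + i w L_(j+1) (and likewise for S_k), with remainders
   bounded uniformly in w.  Expanding the relation above in powers of i w and
   letting w -> 0+ term by term yields a mu_0(dlambda) = phi F and, for all q,
        a mu_(q+1)(dlambda) = sum_(k+j=q) mu_k(dsigma) mu_j(dlambda),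
   from which (i)-(iii) follow by algebra. *)

From Pilot Require Import Defs.
From Stdlib Require Import Reals Lra Lia List Ranalysis.
From Stdlib Require Import ClassicalEpsilon FunctionalExtensionality.
Open Scope R_scope.

Lemma tagged_part_le l x0 b d : tagged_part x0 l b d -> x0 <= b.
Proof.
  revert x0; induction l as [|[t x1] l IH]; simpl; intros x0 Hl; [lra|].
  destruct Hl as (? & _ & _ & Hl); specialize (IH _ Hl); lra.
Qed.

Lemma tagged_part_mono l x0 b d d' :
  d <= d' -> tagged_part x0 l b d -> tagged_part x0 l b d'.
Proof.
  revert x0; induction l as [|[t x1] l IH]; simpl; intros x0 Hd Hl; auto.
  destruct Hl as (? & ? & ? & Hl); repeat split; try lra; auto.
Qed.

(* The uniform partition of [x, x + n h] into n steps, tagged at the right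
   endpoints (right tags make sums against a distribution function vanishing
   on (-oo,0] easy to bound from below). *)
Fixpoint upart (x h : R) (n : nat) : list (R * R) :=
  match n with O => nil | S n' => (x + h, x + h) :: upart (x + h) h n' end.

Lemma upart_tagged n x h d :
  0 < h -> h < d -> tagged_part x (upart x h n) (x + INR n * h) d.
Proof.
  revert x; induction n as [|n IH]; intros x Hh Hd; [simpl; ring|].
  cbn [upart tagged_part]; repeat split; try lra.
  replace (x + INR (S n) * h) with (x + h + INR n * h) by (rewrite S_INR; ring).
  now apply IH.
Qed.

Definition unif (A B : R) (n : nat) : list (R * R) :=
  upart A ((B - A) / INR (S n)) (S n).

Lemma unif_fine A B d : A < B -> 0 < d ->
  exists N, forall n, (N <= n)%nat -> tagged_part A (unif A B n) B d.
Proof.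
  intros HAB Hd.
  destruct (archimed_cor1 (d / (B - A))) as [N [HN HN0]];
    [apply Rdiv_lt_0_compat; lra|].
  exists N; intros n Hn.
  assert (HNpos : 0 < INR N) by (apply lt_0_INR; lia).
  assert (HNn : INR N <= INR (S n)) by (apply le_INR; lia).
  assert (Hstep : (B - A) / INR (S n) < d).
  { apply (Rmult_lt_reg_r (/ (B - A))); [apply Rinv_0_lt_compat; lra|].
    replace ((B - A) / INR (S n) * / (B - A)) with (/ INR (S n)) by (field; lra).
    apply (Rle_lt_trans _ (/ INR N)); [apply Rinv_le_contravar; lra|exact HN]. }
  pose proof (upart_tagged (S n) A ((B - A) / INR (S n)) d) as P.
  replace (A + INR (S n) * ((B - A) / INR (S n))) with B in P by
    (field; apply not_0_INR; lia).
  apply P; [apply Rdiv_lt_0_compat; [lra|apply lt_0_INR; lia]|exact Hstep].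
Qed.

Lemma is_RS_unique f g A B I J :
  A < B -> is_RS f g A B I -> is_RS f g A B J -> I = J.
Proof.
  intros HAB HI HJ.
  destruct (Req_dec I J) as [E|NE]; auto; exfalso.
  assert (He : 0 < Rabs (I - J) / 2).
  { enough (0 < Rabs (I - J)) by lra. apply Rabs_pos_lt; lra. }
  destruct (HI _ He) as [d1 [Hd1 P1]], (HJ _ He) as [d2 [Hd2 P2]].
  destruct (unif_fine A B (Rmin d1 d2)) as [N HN]; [lra|now apply Rmin_pos|].
  specialize (P1 _ (tagged_part_mono _ _ _ _ _ (Rmin_l d1 d2) (HN N (le_n N)))).
  specialize (P2 _ (tagged_part_mono _ _ _ _ _ (Rmin_r d1 d2) (HN N (le_n N)))).
  revert P1 P2; split_Rabs; lra.
Qed.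

Lemma rs_sum_lin f h g al be l x0 :
  rs_sum (fun x => al * f x + be * h x) g x0 l
  = al * rs_sum f g x0 l + be * rs_sum h g x0 l.
Proof.
  revert x0; induction l as [|[t x1] l IH]; simpl; intros x0; [ring|].
  rewrite IH; ring.
Qed.

Lemma is_RS_lin f h g A B I J al be :
  is_RS f g A B I -> is_RS h g A B J ->
  is_RS (fun x => al * f x + be * h x) g A B (al * I + be * J).
Proof.
  intros HI HJ eps He.
  set (K := Rabs al + Rabs be + 1).
  assert (HK : 0 < K) by (unfold K; pose proof (Rabs_pos al); pose proof (Rabs_pos be); lra).
  destruct (HI (eps / K)) as [d1 [Hd1 P1]]; [now apply Rdiv_lt_0_compat|].
  destruct (HJ (eps / K)) as [d2 [Hd2 P2]]; [now apply Rdiv_lt_0_compat|].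
  exists (Rmin d1 d2); split; [now apply Rmin_pos|]; intros l Hl.
  specialize (P1 l (tagged_part_mono _ _ _ _ _ (Rmin_l d1 d2) Hl)).
  specialize (P2 l (tagged_part_mono _ _ _ _ _ (Rmin_r d1 d2) Hl)).
  rewrite rs_sum_lin.
  replace (al * rs_sum f g A l + be * rs_sum h g A l - (al * I + be * J))
    with (al * (rs_sum f g A l - I) + be * (rs_sum h g A l - J)) by ring.
  eapply Rle_lt_trans; [apply Rabs_triang|]; rewrite !Rabs_mult.
  assert (Rabs al * Rabs (rs_sum f g A l - I) <= Rabs al * (eps / K))
    by (apply Rmult_le_compat_l; [apply Rabs_pos|lra]).
  assert (Rabs be * Rabs (rs_sum h g A l - J) <= Rabs be * (eps / K))
    by (apply Rmult_le_compat_l; [apply Rabs_pos|lra]).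
  assert (Heps : eps = K * (eps / K)) by (field; lra).
  assert (0 < eps / K) by (apply Rdiv_lt_0_compat; lra).
  set (e := eps / K) in *; unfold K in Heps; nra.
Qed.

Lemma rs_sum_bound f g M b d : nondecreasing g ->
  forall l x0, tagged_part x0 l b d ->
  (forall t, x0 <= t <= b -> Rabs (f t) <= M) ->
  Rabs (rs_sum f g x0 l) <= M * (g b - g x0).
Proof.
  intros Hg l; induction l as [|[t x1] l IH]; simpl; intros x0 Hl Hf.
  - subst; rewrite Rabs_R0; lra.
  - destruct Hl as (H01 & Ht & _ & Hl); pose proof (tagged_part_le _ _ _ _ Hl).
    assert (IH' := IH x1 Hl (fun s Hs => Hf s ltac:(lra))).
    assert (Hinc : 0 <= g x1 - g x0) by (pose proof (Hg x0 x1); lra).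
    assert (Rabs (f t) * (g x1 - g x0) <= M * (g x1 - g x0))
      by (apply Rmult_le_compat_r; [lra|apply Hf; lra]).
    eapply Rle_trans; [apply Rabs_triang|].
    rewrite Rabs_mult, (Rabs_pos_eq (g x1 - g x0)) by lra; lra.
Qed.

Lemma is_RS_bound f g A B I M : A < B -> nondecreasing g -> is_RS f g A B I ->
  (forall t, A <= t <= B -> Rabs (f t) <= M) -> Rabs I <= M * (g B - g A).
Proof.
  intros HAB Hg HI Hf; apply Rle_plus_epsilon; intros eps He.
  destruct (HI _ He) as [d [Hd P]].
  destruct (unif_fine A B d HAB Hd) as [N HN].
  specialize (P _ (HN N (le_n N))).
  pose proof (rs_sum_bound f g M B d Hg _ A (HN N (le_n N)) Hf).
  revert P H; split_Rabs; lra.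
Qed.

(* Unlike
   tagged partitions, loose partitions remain loose when their first step is
   cut in two, which is what comparing two partitions step by step needs. *)
Fixpoint loose_part (x0 : R) (l : list (R * R)) (b d A B : R) : Prop :=
  match l with
  | nil => x0 = b
  | (t, x1) :: l' =>
      x0 < x1 /\ x1 - d < t < x0 + d /\ A <= t <= B /\ loose_part x1 l' b d A B
  end.

Lemma loose_part_le l x0 b d A B : loose_part x0 l b d A B -> x0 <= b.
Proof.
  revert x0; induction l as [|[t x1] l IH]; simpl; intros x0 Hl; [lra|].
  destruct Hl as (? & _ & _ & Hl); specialize (IH _ Hl); lra.
Qed.

Lemma tagged_loose l x0 b d A B :
  tagged_part x0 l b d -> A <= x0 -> b <= B -> loose_part x0 l b d A B.
Proof.
  revert x0; induction l as [|[t x1] l IH]; simpl; intros x0 Hl HA HB; auto.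
  destruct Hl as (? & ? & ? & Hl); pose proof (tagged_part_le _ _ _ _ Hl).
  repeat split; try lra; apply IH; auto; lra.
Qed.

Section LooseComparison.

Variables (f g : R -> R) (A B b d eps : R).
Hypothesis g_incr : nondecreasing g.
Hypothesis b_le_B : b <= B.
Hypothesis f_unif : forall x y, A <= x <= B -> A <= y <= B ->
  Rabs (x - y) < d -> Rabs (f x - f y) < eps.

Lemma loose_part_cut x0 x1 u y1 Q :
  x0 < x1 <= y1 -> loose_part x0 ((u, y1) :: Q) b d A B ->
  exists Q1, loose_part x1 Q1 b d A B /\ (length Q1 <= S (length Q))%nat /\
    rs_sum f g x0 ((u, y1) :: Q) = f u * (g x1 - g x0) + rs_sum f g x1 Q1.
Proof.
  intros Hx HQ; simpl in HQ; destruct HQ as (H0 & Hu & HuAB & HQ).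
  destruct (Req_dec x1 y1) as [<-|Hlt].
  - exists Q; split; [auto|split; [lia|reflexivity]].
  - exists ((u, y1) :: Q); split; [simpl; repeat split; auto; lra|].
    split; [simpl; lia|simpl; ring].
Qed.

Definition sums_close (n : nat) : Prop := forall P Q x0,
  (length P + length Q <= n)%nat -> A <= x0 ->
  loose_part x0 P b d A B -> loose_part x0 Q b d A B ->
  Rabs (rs_sum f g x0 P - rs_sum f g x0 Q) <= 2 * eps * (g b - g x0).

Lemma tags_close x0 t u : A <= x0 <= B -> A <= t <= B -> A <= u <= B ->
  Rabs (t - x0) < d -> Rabs (u - x0) < d -> Rabs (f t - f u) <= 2 * eps.
Proof.
  intros Hx0 Ht Hu Htx Hux.
  replace (f t - f u) with ((f t - f x0) + (f x0 - f u)) by ring.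
  eapply Rle_trans; [apply Rabs_triang|].
  assert (Rabs (f t - f x0) < eps) by (apply f_unif; auto).
  assert (Rabs (f x0 - f u) < eps) by (apply f_unif; auto; now rewrite Rabs_minus_sym).
  lra.
Qed.

(* Merging step: when the first step of P ends no later than that of Q, cut
   Q there; the first steps then contribute at most 2 eps (g x1 - g x0). *)
Lemma loose_merge_step n : sums_close n ->
  forall t x1 P' u y1 Q' x0, x1 <= y1 -> A <= x0 ->
  (length P' + length ((u, y1) :: Q') <= n)%nat ->
  loose_part x0 ((t, x1) :: P') b d A B -> loose_part x0 ((u, y1) :: Q') b d A B ->
  Rabs (rs_sum f g x0 ((t, x1) :: P') - rs_sum f g x0 ((u, y1) :: Q'))
    <= 2 * eps * (g b - g x0).
Proof.
  intros IH t x1 P' u y1 Q' x0 Hxy HA Hl HP HQ.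
  pose proof (loose_part_le _ _ _ _ _ _ HP) as Hx0b.
  destruct HP as (H01 & Ht & HtAB & HP'); pose proof HQ as (_ & Hu & HuAB & _).
  destruct (loose_part_cut x0 x1 u y1 Q') as (Q1 & HQ1 & HlQ1 & ->); [lra|auto|].
  pose proof (IH P' Q1 x1 ltac:(simpl in Hl; lia) ltac:(lra) HP' HQ1) as Hrest.
  assert (Htu : Rabs (f t - f u) <= 2 * eps)
    by (apply (tags_close x0); try lra; split_Rabs; lra).
  assert (Hinc : 0 <= g x1 - g x0) by (pose proof (g_incr x0 x1); lra).
  assert (Rabs ((f t - f u) * (g x1 - g x0)) <= 2 * eps * (g x1 - g x0))
    by (rewrite Rabs_mult, (Rabs_pos_eq _ Hinc); now apply Rmult_le_compat_r).
  simpl rs_sum.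
  replace (f t * (g x1 - g x0) + rs_sum f g x1 P'
           - (f u * (g x1 - g x0) + rs_sum f g x1 Q1))
    with ((f t - f u) * (g x1 - g x0) + (rs_sum f g x1 P' - rs_sum f g x1 Q1)) by ring.
  eapply Rle_trans; [apply Rabs_triang|]; lra.
Qed.

Lemma loose_sums_close n : sums_close n.
Proof.
  induction n as [|n IH]; intros P Q x0 Hlen HA HP HQ.
  { destruct P, Q; simpl in Hlen; try lia; simpl in HP |- *; subst.
    rewrite Rminus_0_r, Rabs_R0; lra. }
  destruct P as [|[t x1] P'], Q as [|[u y1] Q'].
  - simpl; rewrite Rminus_0_r, Rabs_R0; simpl in HP; subst; lra.
  - simpl in HP, HQ; destruct HQ as (? & _ & _ & HQ).
    pose proof (loose_part_le _ _ _ _ _ _ HQ); lra.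
  - simpl in HP, HQ; destruct HP as (? & _ & _ & HP).
    pose proof (loose_part_le _ _ _ _ _ _ HP); lra.
  - destruct (Rle_dec x1 y1) as [Hxy|Hyx].
    + apply (loose_merge_step n IH); auto; simpl in Hlen |- *; lia.
    + rewrite Rabs_minus_sym.
      apply (loose_merge_step n IH); auto; [lra|simpl in Hlen |- *; lia].
Qed.

End LooseComparison.

Lemma rs_sums_cauchy f g A B : nondecreasing g ->
  (forall x, A <= x <= B -> continuity_pt f x) ->
  forall eps, 0 < eps -> exists d, 0 < d /\ forall l l',
    tagged_part A l B d -> tagged_part A l' B d ->
    Rabs (rs_sum f g A l - rs_sum f g A l') <= eps.
Proof.
  intros Hg Hc eps He.
  set (V := g B - g A).
  set (e := eps / (2 * Rabs V + 1)).
  assert (He' : 0 < e) by (apply Rdiv_lt_0_compat; [lra|pose proof (Rabs_pos V); lra]).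
  destruct (Heine f _ (compact_P3 A B) Hc (mkposreal e He')) as [d Hd].
  exists d; split; [apply cond_pos|]; intros l l' Hl Hl'.
  apply (Rle_trans _ (2 * e * V)).
  - apply (loose_sums_close f g A B B d e Hg (Rle_refl B)
             (fun x y Hx Hy Hxy => Hd x y Hx Hy Hxy) (length l + length l')); auto; try lra;
      apply tagged_loose; auto; lra.
  - assert (Heps : eps = e * (2 * Rabs V + 1)) by (unfold e; field; pose proof (Rabs_pos V); lra).
    pose proof (Rle_abs V); nra.
Qed.

Lemma is_RS_exists f g A B : A < B -> nondecreasing g ->
  (forall x, A <= x <= B -> continuity_pt f x) -> exists I, is_RS f g A B I.
Proof.
  intros HAB Hg Hc.
  pose proof (rs_sums_cauchy f g A B Hg Hc) as Hcau.
  set (s n := rs_sum f g A (unif A B n)).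
  assert (Hs : Cauchy_crit s).
  { intros eps He; destruct (Hcau (eps / 2)) as [d [Hd P]]; [lra|].
    destruct (unif_fine A B d HAB Hd) as [N HN].
    exists N; intros n m Hn Hm; unfold Rdist.
    specialize (P _ _ (HN n Hn) (HN m Hm)); unfold s; lra. }
  destruct (R_complete s Hs) as [I HI].
  exists I; intros eps He.
  destruct (Hcau (eps / 2)) as [d [Hd P]]; [lra|].
  exists d; split; auto; intros l Hl.
  destruct (unif_fine A B d HAB Hd) as [N HN].
  destruct (HI (eps / 2)) as [M HM]; [lra|].
  specialize (HM (max N M) ltac:(lia)); unfold Rdist in HM.
  specialize (P _ _ Hl (HN (max N M) ltac:(lia))); unfold s in HM.
  revert HM P; split_Rabs; lra.
Qed.

Section Positivity.

Variables (f D : R -> R) (b c m : R).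
Hypothesis c_pos : 0 < c.
Hypothesis m_pos : 0 < m.
Hypothesis D_incr : nondecreasing D.
Hypothesis D_vanish : forall x, x <= 0 -> D x = 0.
Hypothesis f_nonneg : forall t, 0 < t <= b -> 0 <= f t.
Hypothesis f_large : forall t, c <= t <= b -> m <= f t.

Lemma right_step_lb x0 x1 : x0 < x1 <= b ->
  m * (D (Rmax x1 c) - D (Rmax x0 c)) <= f x1 * (D x1 - D x0).
Proof.
  intros Hx.
  assert (Hinc : 0 <= D x1 - D x0) by (pose proof (D_incr x0 x1); lra).
  destruct (Rle_dec x1 0) as [Hx1|Hx1].
  - rewrite (D_vanish x1), (D_vanish x0), !Rmax_right by lra; lra.
  - destruct (Rle_dec c x1) as [Hc|Hc].
    + rewrite (Rmax_left x1 c) by lra.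
      pose proof (D_incr x0 (Rmax x0 c) (Rmax_l x0 c)).
      pose proof (f_large x1 ltac:(lra)); nra.
    + rewrite !Rmax_right by lra.
      pose proof (f_nonneg x1 ltac:(lra)); nra.
Qed.

Lemma upart_sum_lb n x h : 0 < h -> x + INR n * h <= b ->
  m * (D (x + INR n * h) - D (Rmax x c)) <= rs_sum f D x (upart x h n).
Proof.
  revert x; induction n as [|n IH]; intros x Hh Hb.
  - simpl; replace (x + 0 * h) with x by ring.
    pose proof (D_incr x (Rmax x c) (Rmax_l x c)); nra.
  - rewrite S_INR in Hb |- *; cbn [upart rs_sum].
    assert (0 <= INR n) by apply pos_INR.
    pose proof (right_step_lb x (x + h) ltac:(nra)).
    specialize (IH (x + h) Hh ltac:(lra)).
    replace (x + h + INR n * h) with (x + (INR n + 1) * h) in IH by ring; lra.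
Qed.

Lemma is_RS_pos A I : A < b -> A <= c -> D c < D b -> is_RS f D A b I -> 0 < I.
Proof.
  intros HAb HAc Hmass HI.
  destruct (HI (m * (D b - D c) / 2)) as [d [Hd P]]; [nra|].
  destruct (unif_fine A b d HAb Hd) as [N HN].
  specialize (P _ (HN N (le_n N))).
  assert (HS : 0 < INR (S N)) by (apply lt_0_INR; lia).
  pose proof (upart_sum_lb (S N) A ((b - A) / INR (S N))
                ltac:(apply Rdiv_lt_0_compat; lra) ltac:(right; field; lra)) as Hlb.
  replace (A + INR (S N) * ((b - A) / INR (S N))) with b in Hlb by (field; lra).
  rewrite Rmax_right in Hlb by lra; fold (unif A b N) in Hlb.
  revert P; split_Rabs; nra.
Qed.

End Positivity.

Lemma mint_ext f h D b : (forall x, f x = h x) -> mint f D b = mint h D b.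
Proof. intros H; f_equal; now apply functional_extensionality. Qed.

Section Integral.

Variables (D : R -> R) (b : R).
Hypothesis b_pos : 0 < b.
Hypothesis D_incr : nondecreasing D.

Lemma mint_eq f I : is_RS f D (-1) b I -> mint f D b = I.
Proof.
  intros HI; unfold mint, RSint.
  apply (is_RS_unique f D (-1) b); [lra| |exact HI].
  apply epsilon_spec; now exists I.
Qed.

Lemma mint_spec f : continuity f -> is_RS f D (-1) b (mint f D b).
Proof.
  intros Hf; destruct (is_RS_exists f D (-1) b) as [I HI]; auto; [lra|].
  now rewrite (mint_eq f I HI).
Qed.

Lemma mint_lin f h al be : continuity f -> continuity h ->
  mint (fun x => al * f x + be * h x) D b = al * mint f D b + be * mint h D b.
Proof. intros; apply mint_eq, is_RS_lin; now apply mint_spec. Qed.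

Lemma mint_scal f c : continuity f -> mint (fun x => c * f x) D b = c * mint f D b.
Proof.
  intros Hf; rewrite (mint_ext _ (fun x => c * f x + 0 * f x)) by (intro; ring).
  rewrite mint_lin by auto; ring.
Qed.

Lemma mint_bound f M : continuity f -> (forall t, -1 <= t <= b -> Rabs (f t) <= M) ->
  Rabs (mint f D b) <= M * (D b - D (-1)).
Proof. intros; eapply is_RS_bound; eauto; [lra|now apply mint_spec]. Qed.

Lemma mint_pos f c m : 0 < c <= b -> 0 < m -> (forall x, x <= 0 -> D x = 0) ->
  D c < D b -> continuity f ->
  (forall t, 0 < t <= b -> 0 <= f t) -> (forall t, c <= t <= b -> m <= f t) ->
  0 < mint f D b.
Proof.
  intros Hc Hm HD0 Hmass Hf Hnn Hlarge.
  apply (is_RS_pos f D b c m) with (A := -1); auto; try lra.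
  now apply mint_spec.
Qed.

End Integral.

(* Complex arithmetic on the record C forms a commutative ring, so that the
   tactic [ring] can be used for complex identities. *)
Definition Czero : Defs.C := RtoC 0.
Definition Cone : Defs.C := RtoC 1.
Definition Copp (z : Defs.C) : Defs.C := mkC (- Re z) (- Im z).
Definition Csub (z w : Defs.C) : Defs.C := Cadd z (Copp w).

Lemma C_ext z z' : Re z = Re z' -> Im z = Im z' -> z = z'.
Proof. destruct z, z'; simpl; intros -> ->; reflexivity. Qed.

Lemma C_ring_theory : ring_theory Czero Cone Cadd Cmul Csub Copp (@eq Defs.C).
Proof.
  constructor; intros;
    apply C_ext; unfold Czero, Cone, RtoC, Cadd, Cmul, Csub, Copp; simpl; ring.
Qed.

Add Ring C_ring : C_ring_theory.

Lemma RtoC_add x y : RtoC (x + y) = Cadd (RtoC x) (RtoC y).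
Proof. apply C_ext; simpl; ring. Qed.

Lemma RtoC_mul x y : RtoC (x * y) = Cmul (RtoC x) (RtoC y).
Proof. apply C_ext; simpl; ring. Qed.

Lemma RtoC_sub x y : RtoC (x - y) = Csub (RtoC x) (RtoC y).
Proof. apply C_ext; simpl; ring. Qed.

Lemma RtoC_inv x : x <> 0 -> Cinv (RtoC x) = RtoC (/ x).
Proof. intros Hx; apply C_ext; simpl; field; auto. Qed.

Lemma Ci_sqr : Cmul Ci Ci = Copp Cone.
Proof. apply C_ext; simpl; ring. Qed.

Lemma Cinv_l z : 0 < Re z -> Cmul (Cinv z) z = Cone.
Proof.
  intros Hz; assert (0 < Re z ^ 2 + Im z ^ 2) by nra.
  apply C_ext; simpl; field; lra.
Qed.

Fixpoint Csum (f : nat -> Defs.C) (n : nat) : Defs.C :=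
  match n with O => Czero | S n' => Cadd (Csum f n') (f n') end.

Lemma Csum_ext f h n : (forall k, (k < n)%nat -> f k = h k) -> Csum f n = Csum h n.
Proof. induction n as [|n IH]; intros H; simpl; auto; rewrite IH, H; auto. Qed.

Lemma Csum_add f h n : Csum (fun k => Cadd (f k) (h k)) n = Cadd (Csum f n) (Csum h n).
Proof. induction n as [|n IH]; simpl; [ring|rewrite IH; ring]. Qed.

Lemma Csum_scal c f n : Csum (fun k => Cmul c (f k)) n = Cmul c (Csum f n).
Proof. induction n as [|n IH]; simpl; [ring|rewrite IH; ring]. Qed.

Lemma RtoC_sum f n : RtoC (sum_f_R0 f n) = Csum (fun k => RtoC (f k)) (S n).
Proof.
  induction n as [|n IH]; simpl; [apply C_ext; simpl; ring|].
  rewrite RtoC_add, IH; reflexivity.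
Qed.

Definition Cnorm1 (z : Defs.C) : R := Rabs (Re z) + Rabs (Im z).
Definition Cbounded (g : R -> Defs.C) : Prop := exists M, forall w, Cnorm1 (g w) <= M.

Lemma Cbounded_const c : Cbounded (fun _ => c).
Proof. now exists (Cnorm1 c). Qed.

Lemma Cbounded_add g h : Cbounded g -> Cbounded h -> Cbounded (fun w => Cadd (g w) (h w)).
Proof.
  intros [M HM] [N HN]; exists (M + N); intros w.
  specialize (HM w); specialize (HN w); unfold Cnorm1 in *; simpl.
  pose proof (Rabs_triang (Re (g w)) (Re (h w))).
  pose proof (Rabs_triang (Im (g w)) (Im (h w))); lra.
Qed.

Lemma Cbounded_opp g : Cbounded g -> Cbounded (fun w => Copp (g w)).
Proof.
  intros [M HM]; exists M; intros w; specialize (HM w); unfold Cnorm1 in *; simpl.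
  now rewrite !Rabs_Ropp.
Qed.

Lemma Cbounded_mul g h : Cbounded g -> Cbounded h -> Cbounded (fun w => Cmul (g w) (h w)).
Proof.
  intros [M HM] [N HN]; exists (M * N); intros w.
  specialize (HM w); specialize (HN w); unfold Cnorm1 in *; simpl.
  destruct (g w) as [a1 b1], (h w) as [a2 b2]; simpl in *.
  pose proof (Rabs_pos a1); pose proof (Rabs_pos b1);
  pose proof (Rabs_pos a2); pose proof (Rabs_pos b2).
  unfold Rminus; eapply Rle_trans; [apply Rplus_le_compat; apply Rabs_triang|].
  rewrite Rabs_Ropp, !Rabs_mult.
  apply (Rle_trans _ ((Rabs a1 + Rabs b1) * (Rabs a2 + Rabs b2))); [nra|].
  apply Rmult_le_compat; nra.
Qed.

Lemma Cbounded_sum (F : nat -> R -> Defs.C) n :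
  (forall k, Cbounded (F k)) -> Cbounded (fun w => Csum (fun k => F k w) n).
Proof.
  intros HF; induction n as [|n IH]; simpl; [apply Cbounded_const|].
  now apply Cbounded_add.
Qed.

Lemma Cvanish e (g : R -> Defs.C) : Cbounded g ->
  (forall w, 0 < w -> e = Cmul (RtoC w) (g w)) -> e = Czero.
Proof.
  intros [M HM] He.
  assert (Hsmall : forall x, (forall w, 0 < w -> Rabs x <= w * M) -> x = 0).
  { intros x Hx; destruct (Req_dec x 0) as [|Hne]; auto; exfalso.
    pose proof (Rabs_pos_lt x Hne).
    assert (HM0 : 0 <= M) by (specialize (Hx 1 Rlt_0_1); lra).
    specialize (Hx (Rabs x / (2 * (M + 1))) ltac:(apply Rdiv_lt_0_compat; lra)).
    assert (Rabs x / (2 * (M + 1)) * M < Rabs x).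
    { apply (Rmult_lt_reg_r (2 * (M + 1))); [lra|].
      replace (Rabs x / (2 * (M + 1)) * M * (2 * (M + 1))) with (Rabs x * M)
        by (field; lra); nra. }
    lra. }
  apply C_ext; simpl; apply Hsmall; intros w Hw; rewrite (He w Hw); simpl;
    specialize (HM w); unfold Cnorm1 in HM;
    rewrite Rmult_0_l, ?Rminus_0_r, ?Rplus_0_r, Rabs_mult, Rabs_pos_eq by lra;
    pose proof (Rabs_pos (Re (g w))); pose proof (Rabs_pos (Im (g w))); nra.
Qed.

Lemma Cmul_iw_reg w z : w <> 0 -> Cmul (Cmul Ci (RtoC w)) z = Czero -> z = Czero.
Proof.
  intros Hw Hz.
  transitivity (Cmul (Cmul (Copp Ci) (RtoC (/ w))) (Cmul (Cmul Ci (RtoC w)) z)).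
  - assert (Hinv : Cmul (RtoC (/ w)) (RtoC w) = Cone)
      by (rewrite <- RtoC_mul, Rinv_l by exact Hw; reflexivity).
    ring [Ci_sqr Hinv].
  - rewrite Hz; ring.
Qed.

Definition stieltjes (D : R -> R) (b : R) (p : R -> R) (w : R) : Defs.C :=
  Cmint (fun t => Cdiv (RtoC (p t)) (one_m_iwt w t)) D b.

Lemma stieltjes_ext D b p q w :
  (forall t, p t = q t) -> stieltjes D b p w = stieltjes D b q w.
Proof.
  intros H; replace p with q; [reflexivity|].
  symmetry; now apply functional_extensionality.
Qed.

Definition ker_re (w t : R) : R := / (1 + (w * t) ^ 2).
Definition ker_im (w t : R) : R := w * t / (1 + (w * t) ^ 2).

Lemma ker_den_pos w t : 0 < 1 + (w * t) ^ 2.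
Proof. nra. Qed.

Lemma ker_re_cont p w : continuity p -> continuity (fun t => p t * ker_re w t).
Proof.
  intros Hp; apply (continuity_mult p); auto; unfold ker_re.
  apply derivable_continuous; reg; intros t; pose proof (ker_den_pos w t); lra.
Qed.

Lemma ker_im_cont p w : continuity p -> continuity (fun t => p t * ker_im w t).
Proof.
  intros Hp; apply (continuity_mult p); auto; unfold ker_im.
  apply derivable_continuous; reg; intros t; pose proof (ker_den_pos w t); lra.
Qed.

Lemma ker_bound w t : Rabs (ker_re w t) <= 1 /\ Rabs (ker_im w t) <= 1.
Proof.
  pose proof (ker_den_pos w t); unfold ker_re, ker_im.
  split; apply Rabs_le; split;
    first [apply (Rmult_le_reg_r (1 + (w * t) ^ 2)); [lra|]; field_simplify; [|lra]
          |idtac];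
    nra.
Qed.

Section Transform.

Variables (D : R -> R) (b : R).
Hypothesis b_pos : 0 < b.
Hypothesis D_incr : nondecreasing D.

Lemma stieltjes_re p w : Re (stieltjes D b p w) = mint (fun t => p t * ker_re w t) D b.
Proof.
  apply mint_ext; intros t; pose proof (ker_den_pos w t).
  unfold Cdiv, Cmul, Cinv, RtoC, one_m_iwt, ker_re; simpl; field; nra.
Qed.

Lemma stieltjes_im p w : Im (stieltjes D b p w) = mint (fun t => p t * ker_im w t) D b.
Proof.
  apply mint_ext; intros t; pose proof (ker_den_pos w t).
  unfold Cdiv, Cmul, Cinv, RtoC, one_m_iwt, ker_im; simpl; field; nra.
Qed.

(* From 1/(1 - iwt) = 1 + iwt/(1 - iwt): the transform of p is its integral
   plus iw times the transform of t p(t).  Iterating this expands the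
   transform in powers of iw with the moments as coefficients. *)
Lemma stieltjes_shift p w : continuity p ->
  stieltjes D b p w = Cadd (RtoC (mint p D b))
    (Cmul (Cmul Ci (RtoC w)) (stieltjes D b (fun t => p t * t) w)).
Proof.
  intros Hp; assert (Hpt : continuity (fun t => p t * t))
    by (apply (continuity_mult p); auto; apply derivable_continuous, derivable_id).
  apply C_ext; cbn [Re Im Cadd Cmul RtoC Ci]; rewrite !stieltjes_re, !stieltjes_im.
  - rewrite (mint_ext _ (fun t => 1 * p t + (- w) * (p t * t * ker_im w t))),
      mint_lin by (auto using ker_im_cont || (intros t; pose proof (ker_den_pos w t);
                   unfold ker_re, ker_im; field; lra)).
    ring.
  - rewrite (mint_ext _ (fun t => w * (p t * t * ker_re w t))), mint_scal
      by (auto using ker_re_cont || (intros t; pose proof (ker_den_pos w t);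
          unfold ker_re, ker_im; field; lra)).
    ring.
Qed.

Lemma stieltjes_bounded p : continuity p -> Cbounded (stieltjes D b p).
Proof.
  intros Hp.
  destruct (continuity_ab_maj (fun t => Rabs (p t)) (-1) b) as [t0 [Ht0 _]]; [lra|
    intros c _; apply (continuity_pt_comp p Rabs); [apply Hp|apply Rcontinuity_abs]|].
  set (M := Rabs (p t0) * (D b - D (-1))).
  exists (M + M); intros w; unfold Cnorm1; rewrite stieltjes_re, stieltjes_im.
  apply Rplus_le_compat; apply mint_bound; auto using ker_re_cont, ker_im_cont;
    intros t Ht; rewrite Rabs_mult; destruct (ker_bound w t);
    specialize (Ht0 t Ht); pose proof (Rabs_pos (p t)); nra.
Qed.

Lemma stieltjes_re_pos p c m w : 0 < c <= b -> 0 < m ->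
  (forall x, x <= 0 -> D x = 0) -> D c < D b -> continuity p ->
  (forall t, 0 < t <= b -> 0 <= p t) -> (forall t, c <= t <= b -> m <= p t) ->
  0 < Re (stieltjes D b p w).
Proof.
  intros Hc Hm HD0 Hmass Hp Hnn Hlarge; rewrite stieltjes_re.
  apply (mint_pos D b b_pos D_incr _ c (m * ker_re w b)); auto using ker_re_cont.
  - unfold ker_re; pose proof (ker_den_pos w b); apply Rmult_lt_0_compat; auto.
    now apply Rinv_0_lt_compat.
  - intros t Ht; pose proof (ker_den_pos w t); unfold ker_re.
    apply Rmult_le_pos; [auto|left; now apply Rinv_0_lt_compat].
  - intros t Ht; unfold ker_re; pose proof (Hlarge t Ht).
    assert (Hwt : (w * t) ^ 2 <= (w * b) ^ 2).
    { assert (t * t <= b * b) by nra.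
      replace ((w * t) ^ 2) with ((w * w) * (t * t)) by ring.
      replace ((w * b) ^ 2) with ((w * w) * (b * b)) by ring; nra. }
    apply Rmult_le_compat; try lra.
    + left; apply Rinv_0_lt_compat, ker_den_pos.
    + apply Rinv_le_contravar; [apply ker_den_pos|lra].
Qed.


End Transform.

Lemma continuity_monomial k : continuity (fun t => t ^ k).
Proof. exact (derivable_continuous _ (derivable_pow k)). Qed.

Lemma continuity_lambda_weight j : continuity (fun t => t ^ j * t).
Proof.
  apply (continuity_mult (fun t => t ^ j)); [apply continuity_monomial|].
  apply derivable_continuous, derivable_id.
Qed.

Section Moments.

Variables (Th1 a : R) (G Sd : R -> R).
Hypothesis Th1_pos : 0 < Th1.
Hypothesis G_incr : nondecreasing G.
Hypothesis Sd_incr : nondecreasing Sd.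

Definition Lam (j : nat) (w : R) : Defs.C := stieltjes G Th1 (fun t => t ^ j * t) w.
Definition Sig (k : nat) (w : R) : Defs.C := stieltjes Sd Th1 (fun t => t ^ k) w.

Let muL := mu_lambda Th1 G.
Let muS := mu_sigma Th1 Sd.

Lemma Lam_shift j w :
  Lam j w = Cadd (RtoC (muL j)) (Cmul (Cmul Ci (RtoC w)) (Lam (S j) w)).
Proof.
  unfold Lam; rewrite stieltjes_shift by auto using continuity_lambda_weight.
  f_equal; f_equal; apply stieltjes_ext; intros t; simpl; ring.
Qed.

Lemma Sig_shift k w :
  Sig k w = Cadd (RtoC (muS k)) (Cmul (Cmul Ci (RtoC w)) (Sig (S k) w)).
Proof.
  unfold Sig; rewrite stieltjes_shift by auto using continuity_monomial.
  f_equal; f_equal; apply stieltjes_ext; intros t; simpl; ring.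
Qed.

(* U_q = a L_(q+1) - sum_(k<q) sigma_k L_(q-k) - S_q L_0, whose value at
   w = 0 is the defect d_q of the q-th moment relation. *)
Definition U (q : nat) (w : R) : Defs.C :=
  Csub (Csub (Cmul (RtoC a) (Lam (S q) w))
             (Csum (fun k => Cmul (RtoC (muS k)) (Lam (q - k) w)) q))
       (Cmul (Sig q w) (Lam 0 w)).

Definition moment_defect (q : nat) : R :=
  a * muL (S q) - sum_f_R0 (fun k => muS k * muL (q - k)%nat) q.

Lemma U_shift q w :
  U q w = Cadd (RtoC (moment_defect q)) (Cmul (Cmul Ci (RtoC w)) (U (S q) w)).
Proof.
  set (z := Cmul Ci (RtoC w)).
  assert (Hsum : Csum (fun k => Cmul (RtoC (muS k)) (Lam (q - k) w)) q
    = Cadd (Csum (fun k => RtoC (muS k * muL (q - k)%nat)) q)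
           (Cmul z (Csum (fun k => Cmul (RtoC (muS k)) (Lam (S q - k) w)) q))).
  { rewrite <- Csum_scal, <- Csum_add; apply Csum_ext; intros k Hk.
    rewrite (Lam_shift (q - k)), RtoC_mul.
    replace (S (q - k)) with (S q - k)%nat by lia; fold z; ring. }
  assert (Hdefect : RtoC (moment_defect q) = Csub (Cmul (RtoC a) (RtoC (muL (S q))))
    (Cadd (Csum (fun k => RtoC (muS k * muL (q - k)%nat)) q) (Cmul (RtoC (muS q)) (RtoC (muL 0%nat))))).
  { unfold moment_defect; rewrite RtoC_sub, RtoC_mul, RtoC_sum; cbn [Csum].
    now rewrite Nat.sub_diag, RtoC_mul. }
  unfold U; rewrite Hdefect, Hsum; cbn [Csum]; rewrite Nat.sub_succ_l, Nat.sub_diag by lia.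
  rewrite (Lam_shift (S q)), (Sig_shift q), (Lam_shift 0); fold z; ring.
Qed.

Lemma Lam_bounded j : Cbounded (Lam j).
Proof. apply stieltjes_bounded; auto using continuity_lambda_weight. Qed.

Lemma Sig_bounded k : Cbounded (Sig k).
Proof. apply stieltjes_bounded; auto using continuity_monomial. Qed.

Lemma U_bounded q : Cbounded (U q).
Proof.
  unfold U, Csub.
  repeat first [apply Cbounded_add | apply Cbounded_opp | apply Cbounded_mul
               | apply Cbounded_const | apply Lam_bounded | apply Sig_bounded].
  apply (Cbounded_sum (fun k w => Cmul (RtoC (muS k)) (Lam (q - k) w))); intros k.
  apply Cbounded_mul; [apply Cbounded_const|apply Lam_bounded].
Qed.

(* If U_q vanishes for w > 0, then so does U_(q+1), and the q-th moment
   relation holds: the constant term of U_q = d_q + i w U_(q+1) must vanish. *)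
Lemma U_vanish_step q : (forall w, 0 < w -> U q w = Czero) ->
  moment_defect q = 0 /\ forall w, 0 < w -> U (S q) w = Czero.
Proof.
  intros HU.
  assert (Hdq : RtoC (moment_defect q) = Czero).
  { apply (Cvanish _ (fun w => Copp (Cmul Ci (U (S q) w)))).
    - apply Cbounded_opp, Cbounded_mul; [apply Cbounded_const|apply U_bounded].
    - intros w Hw; pose proof (U_shift q w) as E; rewrite HU in E by exact Hw.
      transitivity (Csub (RtoC (moment_defect q))
                      (Cadd (RtoC (moment_defect q)) (Cmul (Cmul Ci (RtoC w)) (U (S q) w))));
        [rewrite <- E; ring|ring]. }
  split; [now apply (f_equal Re) in Hdq|].
  intros w Hw; apply (Cmul_iw_reg w); [lra|].
  pose proof (U_shift q w) as E; rewrite HU, Hdq in E by exact Hw.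
  transitivity (Csub (Cadd Czero (Cmul (Cmul Ci (RtoC w)) (U (S q) w))) Czero);
    [ring|rewrite <- E; ring].
Qed.

Lemma moment_relations : (forall w, 0 < w -> U 0 w = Czero) ->
  forall q, moment_defect q = 0.
Proof.
  intros H0 q.
  assert (Hall : forall n w, 0 < w -> U n w = Czero).
  { intros n; induction n as [|n IH]; [exact H0|apply (U_vanish_step n IH)]. }
  exact (proj1 (U_vanish_step q (Hall q))).
Qed.

Lemma base_relation c :
  (forall w, 0 < w -> Cmul (Cadd (Cmul Ci (RtoC a)) (Cmul (RtoC w) (Sig 0 w))) (Lam 0 w)
                      = Cmul Ci (RtoC c)) ->
  a * muL 0%nat = c /\ forall w, 0 < w -> U 0 w = Czero.
Proof.
  intros Hrel.
  assert (Hexp : forall w, 0 < w ->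
    Cmul Ci (RtoC (a * muL 0%nat - c)) = Cmul (RtoC w) (U 0 w)).
  { intros w Hw; rewrite RtoC_sub, RtoC_mul.
    assert (HL0 := Lam_shift 0 w); specialize (Hrel w Hw); rewrite HL0 in Hrel.
    unfold U; cbn [Csum]; rewrite HL0.
    transitivity (Csub (Cmul Ci (Cmul (RtoC a) (RtoC (muL 0%nat))))
      (Cmul (Cadd (Cmul Ci (RtoC a)) (Cmul (RtoC w) (Sig 0 w)))
            (Cadd (RtoC (muL 0%nat)) (Cmul (Cmul Ci (RtoC w)) (Lam 1 w)))));
      [rewrite Hrel; ring|ring [Ci_sqr]]. }
  assert (Hc : a * muL 0%nat - c = 0).
  { assert (H : RtoC (a * muL 0%nat - c) = Czero).
    { apply (Cvanish _ (fun w => Copp (Cmul Ci (U 0 w)))).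
      - apply Cbounded_opp, Cbounded_mul; [apply Cbounded_const|apply U_bounded].
      - intros w Hw.
        transitivity (Copp (Cmul Ci (Cmul Ci (RtoC (a * muL 0%nat - c)))));
          [ring [Ci_sqr]|rewrite (Hexp w Hw); ring]. }
    now apply (f_equal Re) in H. }
  split; [lra|]; intros w Hw; apply (Cmul_iw_reg w); [lra|].
  transitivity (Cmul Ci (Cmul (RtoC w) (U 0 w))); [ring|].
  rewrite <- (Hexp w Hw), Hc; apply C_ext; simpl; ring.
Qed.

End Moments.

Lemma mass_away_from_zero (G : R -> R) Th1 : 0 < Th1 -> right_continuous G ->
  G 0 = 0 -> G Th1 = 1 -> exists c, 0 < c <= Th1 /\ G c < G Th1.
Proof.
  intros HT Hrc HG0 HG1.
  destruct (Hrc 0 (1 / 2)) as [d [Hd Hnear]]; [lra|].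
  exists (Rmin (d / 2) Th1); split; [split; [apply Rmin_pos|apply Rmin_r]; lra|].
  assert (Rmin (d / 2) Th1 <= d / 2) by apply Rmin_l.
  assert (0 < Rmin (d / 2) Th1) by (apply Rmin_pos; lra).
  specialize (Hnear (Rmin (d / 2) Th1) ltac:(lra)).
  rewrite HG0, HG1 in *; revert Hnear; split_Rabs; lra.
Qed.

Section LambdaPositivity.

Variables (Th1 c : R) (G : R -> R).
Hypothesis c_range : 0 < c <= Th1.
Hypothesis G_incr : nondecreasing G.
Hypothesis G_vanish : forall x, x <= 0 -> G x = 0.
Hypothesis G_mass : G c < G Th1.

Lemma mu_lambda_pos j : 0 < mu_lambda Th1 G j.
Proof.
  apply (mint_pos G Th1 ltac:(lra) G_incr _ c (c ^ j * c)); auto.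
  - apply Rmult_lt_0_compat; [apply pow_lt|]; lra.
  - apply continuity_lambda_weight.
  - intros t Ht; apply Rmult_le_pos; [apply pow_le|]; lra.
  - intros t Ht; apply Rmult_le_compat; try lra; [apply pow_le; lra|].
    apply pow_incr; lra.
Qed.

Lemma Lam0_re_pos w : 0 < Re (Lam Th1 G 0 w).
Proof.
  apply (stieltjes_re_pos G Th1 ltac:(lra) G_incr _ c c); auto; try lra.
  - apply continuity_lambda_weight.
  - intros t Ht; simpl; lra.
  - intros t Ht; simpl; lra.
Qed.

End LambdaPositivity.

Lemma Kfun_Lam nu F Th1 G w : Kfun nu F Th1 G w = Cmul (RtoC (nu / F)) (Lam Th1 G 0 w).
Proof.
  unfold Kfun, Lam, stieltjes; do 2 f_equal.
  apply functional_extensionality; intros t; do 2 f_equal; simpl; ring.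
Qed.

Lemma K0_value nu F Th1 G : 0 < Th1 -> nondecreasing G ->
  Kfun nu F Th1 G 0 = RtoC (nu / F * mu_lambda Th1 G 0).
Proof.
  intros HT HG; rewrite Kfun_Lam, (Lam_shift Th1 G HT HG 0 0), !RtoC_mul.
  change (RtoC 0) with Czero; ring.
Qed.

Lemma Cmint_Sig S Th1 w :
  Cmint (fun t => Cinv (one_m_iwt w t)) S Th1 = Sig Th1 S 0 w.
Proof.
  unfold Sig, stieltjes; f_equal; apply functional_extensionality; intros t.
  apply C_ext; simpl; ring.
Qed.

Lemma admittance_relation (Th1 F eta rhof phi nu a w : R) (G S : R -> R) :
  0 < F -> 0 < rhof -> 0 < nu -> nu = eta / rhof -> 0 < w ->
  0 < Re (Lam Th1 G 0 w) ->
  Tfun eta phi rhof nu F Th1 G w =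
    Cadd (Cmul Ci (RtoC (a / w))) (Cmint (fun t => Cinv (one_m_iwt w t)) S Th1) ->
  Cmul (Cadd (Cmul Ci (RtoC a)) (Cmul (RtoC w) (Sig Th1 S 0 w))) (Lam Th1 G 0 w)
    = Cmul Ci (RtoC (phi * F)).
Proof.
  intros HF Hr Hnu Hnueq Hw HL0 HT.
  unfold Tfun in HT; rewrite Kfun_Lam, Cmint_Sig in HT.
  set (L0 := Lam Th1 G 0 w) in *; set (S0 := Sig Th1 S 0 w) in *.
  set (K := Cmul (RtoC (nu / F)) L0) in *.
  assert (HK : Cmul (Cinv K) K = Cone)
    by (apply Cinv_l; unfold K; cbn [Re Im Cmul RtoC];
        rewrite Rmult_0_l, Rminus_0_r; apply Rmult_lt_0_compat;
        [apply Rdiv_lt_0_compat|]; lra).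
  assert (Ha : RtoC a = Cmul (RtoC (a / w)) (RtoC w))
    by (rewrite <- RtoC_mul; f_equal; field; lra).
  assert (HL : L0 = Cmul (RtoC (F / nu)) K)
    by (unfold K; transitivity (Cmul (RtoC (F / nu * (nu / F))) L0);
        [replace (F / nu * (nu / F)) with 1 by (field; lra);
         change (RtoC 1) with Cone; ring
        |rewrite RtoC_mul; ring]).
  assert (Hc : RtoC (phi * F) = Cmul (RtoC (eta * phi / (w * rhof))) (RtoC (w * (F / nu))))
    by (rewrite <- RtoC_mul; f_equal; subst nu; field; repeat split; lra || (intro; subst; lra)).
  rewrite Ha, HL, Hc, RtoC_mul.
  transitivity (Cmul (Cmul (Cadd (Cmul Ci (RtoC (a / w))) S0) K)
                     (Cmul (RtoC w) (RtoC (F / nu))));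
    [ring|rewrite <- HT; ring [HK]].
Qed.

Theorem mainTheorem4 (Th1 F eta rhof phi nu a : R) (G S : R -> R) :
  0 < Th1 -> 0 < F -> 0 < eta -> 0 < rhof -> 0 < phi -> 0 < nu ->
  nu = eta / rhof ->
  (* G *)
  nondecreasing G -> right_continuous G ->
  (forall x, x <= 0 -> G x = 0) -> (forall x, Th1 <= x -> G x = 1) ->
  (* a >= 0 and sigma positive measure on [0,Th1], distribution function S *)
  0 <= a ->
  nondecreasing S -> right_continuous S ->
  (forall x, x < 0 -> S x = 0) -> (forall x, Th1 <= x -> S x = S Th1) ->
  (* T(w) = a i / w + int_0^Th1 dsigma(t) / (1 - i w t) *)
  (forall w, w <> 0 ->
     Tfun eta phi rhof nu F Th1 G w =
     Cadd (Cmul Ci (RtoC (a / w))) (Cmint (fun t => Cinv (one_m_iwt w t)) S Th1)) ->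
  let K0 := Kfun nu F Th1 G 0 in
  let ainf := phi * F in
  let muL := mu_lambda Th1 G in
  let muS := mu_sigma Th1 S in
  (* (i) *)
  (RtoC (muL 0%nat) = Cmul (RtoC (F / nu)) K0 /\
   RtoC (muL 0%nat) = Cmul (RtoC (ainf / (phi * nu))) K0) /\
  (* (ii) *)
  (forall p : nat, (1 <= p)%nat ->
     muL p = muL 0%nat / ainf *
             sum_f_R0 (fun k => muS k * muL (p - 1 - k)%nat) (p - 1)) /\
  (* (iii) *)
  (muS 0%nat = ainf * muL 1%nat / (muL 0%nat) ^ 2 /\
   RtoC (muS 0%nat) =
     Cmul (Cdiv (RtoC (nu ^ 2 * phi)) (Cmul (Cmul K0 K0) (RtoC F))) (RtoC (muL 1%nat)) /\
   ainf = muS 0%nat * (muL 0%nat) ^ 2 / muL 1%nat).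
Proof.
  intros HT HF _ Hr Hphi Hnu Hnueq HGi HGrc HG0 HG1 _ HSi _ _ _ HTw K0 ainf muL muS.
  subst K0 ainf muL muS.
  destruct (mass_away_from_zero G Th1) as [c [Hc Hmass]];
    [exact HT|exact HGrc|apply HG0; lra|apply HG1; lra|].
  pose proof (mu_lambda_pos Th1 c G Hc HGi HG0 Hmass) as Hmu.
  destruct (base_relation Th1 a G S HT HGi HSi (phi * F)) as [Ha HU0].
  { intros w Hw; apply (admittance_relation Th1 F eta rhof phi nu a w G S); auto;
      [apply (Lam0_re_pos Th1 c G); auto|apply HTw; lra]. }
  pose proof (moment_relations Th1 a G S HT HGi HSi HU0) as Hdefect.
  pose proof (Hmu 0%nat) as Hmu0; pose proof (Hmu 1%nat) as Hmu1.
  assert (Ha0 : a <> 0) by (intro E; rewrite E in Ha; nra).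
  assert (Hs0 : mu_sigma Th1 S 0 = phi * F * mu_lambda Th1 G 1 / mu_lambda Th1 G 0 ^ 2).
  { specialize (Hdefect 0%nat); unfold moment_defect in Hdefect; simpl in Hdefect.
    rewrite <- Ha; apply (Rmult_eq_reg_r (mu_lambda Th1 G 0)); [field_simplify|]; lra. }
  rewrite (K0_value nu F Th1 G HT HGi); split; [|split; [|repeat split]].
  - split; rewrite <- RtoC_mul; f_equal; field; lra.
  - intros [|q] Hq; [lia|]; specialize (Hdefect q); unfold moment_defect in Hdefect.
    replace (Datatypes.S q - 1)%nat with q by lia; rewrite <- Ha.
    match goal with |- _ = _ * ?X => replace X with (a * mu_lambda Th1 G (Datatypes.S q)) by lra end.
    field; lra.
  - exact Hs0.
  - assert (Hk : 0 < nu / F * mu_lambda Th1 G 0)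
      by (apply Rmult_lt_0_compat; [apply Rdiv_lt_0_compat|]; lra).
    unfold Cdiv; rewrite <- !RtoC_mul, RtoC_inv, <- !RtoC_mul.
    + f_equal; rewrite Hs0; field; lra.
    + apply Rgt_not_eq, Rmult_lt_0_compat; [apply Rmult_lt_0_compat|]; lra.
  - rewrite Hs0; field; lra.
Qed.
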